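(* Let $G$ be a group generated by $x_1,\dots,x_n$, with finite commutator subgroup $C=[G,G]$, such that $G/C$ is free abelian of rank $n$ with basis the images of $x_1,\dots,x_n$. Define $$X=\{g_{\mathbf m}\in T:\ c_{\,x_1^{m_1}x_2^{m_2}\cdots x_{k-1}^{m_{k-1}},\;x_k}=e\ \text{ for all } k=1,\dots,n\},\qquad P=X\cap \mathcal C_G(C),$$ where $\mathcal C_G(C)$ is the centralizer of $C$ in $G$. For $1\le i,j\le n$ let $V_{ij}$ be the least positive integer with $c_{x_i^{V_{ij}}x_j}=e$ and $v_i$ the least positive integer with $x_i^{v_i}\in\mathcal C_G(C)$ (these exist). Then: 1. For every generating set $\Lambda$ of $G$, the set of $\mathbf m\in\mathbb Z^n$ such that $l_{\mathbf r+\mathbf m,\lambda}=l_{\mathbf r,\lambda}$ for all $\mathbf r\in\mathbb Z^n$ and all $\lambda\in\Lambda$ is exactly $\{\mathbf m: g_{\mathbf m}\in P\}$; in particular it does not depend on $\Lambda$. 2. $P$ is a subgroup of $G$ isomorphic to $\mathbb Z^n$. 3. $P$ contains the non-trivial subgroup $P_{\mathrm{straight}}=\langle x_i^{m_i}: i=1,\dots,n\rangle$, where $m_i=\operatorname{lcm}\big(\{V_{ij}: n\ge j>i\}\cup\{v_i\}\big)$.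
   Context: Notation: $\bar g=g^{-1}$; the commutator is $c_{gh}=\bar g\,\bar h\,g\,h$; $c^{(g)}=\bar g\,c\,g$. For $\mathbf r\in\mathbb Z^n$ put $g_{\mathbf r}=x_1^{r_1}x_2^{r_2}\cdots x_n^{r_n}$ and $T=\{g_{\mathbf r}:\mathbf r\in\mathbb Z^n\}$ (Schreier transversal). Every $g\in G$ decomposes uniquely as $g=g_{\mathbf r}c$ with $c\in C$; write $\mathbf r_g=\mathbf r$ (the image of $g$ in $G/C\cong\mathbb Z^n$). For $\mathbf r\in\mathbb Z^n$ and $\lambda\in G$ the link is $l_{\mathbf r,\lambda}=\overline{g_{\mathbf r+\mathbf r_\lambda}}\,\lambda\,g_{\mathbf r}\in C$. *)

(* Possibly infinite groups: MathComp's [groupType]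
   (boot/monoid.v), i.e. a choiceType with a group law. *)
From HB Require Import structures.
From mathcomp Require Import all_boot.
From mathcomp Require Import ssralg ssrint.

Set Implicit Arguments.
Unset Strict Implicit.
Unset Printing Implicit Defensive.

Local Open Scope group_scope.

Section Defs.
Variable G : groupType.

Definition gexpz (g : G) (m : int) : G :=
  match m with
  | Posz k => g ^+ k
  | Negz k => (g ^+ k.+1)^-1
  end.

Definition comm (g h : G) : G := g^-1 * (h^-1 * (g * h)).

Definition is_subgroup (H : G -> Prop) : Prop :=
  [/\ H 1, (forall a b, H a -> H b -> H (a * b)) & (forall a, H a -> H a^-1)].

Definition gen (S : G -> Prop) : G -> Prop :=
  fun g => forall H : G -> Prop, is_subgroup H -> (forall s, S s -> H s) -> H g.

Definition generates (S : G -> Prop) : Prop := forall g, gen S g.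

Definition commutator_subgroup : G -> Prop :=
  gen (fun g => exists a b, g = comm a b).

Definition centralizer (S : G -> Prop) : G -> Prop :=
  fun g => forall c, S c -> g * c = c * g.

Definition finite_set (S : G -> Prop) : Prop :=
  exists s : seq G, forall g, S g <-> g \in s.

Variables (n : nat) (x : 'I_n -> G).

(* Z^n is represented by functions 'I_n -> int (index i : 'I_n stands for i+1) *)
Definition vadd (r m : 'I_n -> int) : 'I_n -> int := fun i => (r i + m i)%R.

Definition gr (r : 'I_n -> int) : G := \prod_(i < n) gexpz (x i) (r i).

(* x_1^{m_1} ... x_{k-1}^{m_{k-1}} for the index k (0-based: product over i < k) *)
Definition gprefix (m : 'I_n -> int) (k : 'I_n) : G :=
  \prod_(i < n | (i < k)%N) gexpz (x i) (m i).

(* r_g = r  iff  g = g_r c with c in C *)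
Definition is_rvec (g : G) (r : 'I_n -> int) : Prop :=
  commutator_subgroup ((gr r)^-1 * g).

Definition link (r : 'I_n -> int) (lam : G) (rlam : 'I_n -> int) : G :=
  (gr (vadd r rlam))^-1 * lam * gr r.

Definition Xset : G -> Prop :=
  fun g => exists m, g = gr m /\ forall k : 'I_n, comm (gprefix m k) (x k) = 1.

Definition Pset : G -> Prop :=
  fun g => Xset g /\ centralizer commutator_subgroup g.

Definition is_V (i j : 'I_n) (V : nat) : Prop :=
  (0 < V)%N /\ comm (x i ^+ V) (x j) = 1 /\
  forall k, (0 < k < V)%N -> comm (x i ^+ k) (x j) <> 1.

Definition is_v (i : 'I_n) (v : nat) : Prop :=
  (0 < v)%N /\ centralizer commutator_subgroup (x i ^+ v) /\
  forall k, (0 < k < v)%N -> ~ centralizer commutator_subgroup (x i ^+ k).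

Definition mstraight (V : 'I_n -> 'I_n -> nat) (v : 'I_n -> nat) (i : 'I_n) : nat :=
  lcmn (\big[lcmn/1%N]_(j < n | (i < j)%N) V i j) (v i).

Definition Pstraight (V : 'I_n -> 'I_n -> nat) (v : 'I_n -> nat) : G -> Prop :=
  gen (fun g => exists i, g = x i ^+ mstraight V v i).

End Defs.

From Pilot Require Import Defs.
From HB Require Import structures.
From mathcomp Require Import all_boot.
From mathcomp Require Import ssralg ssrnum ssrint intdiv.
From mathcomp Require Import zify.
From Stdlib Require Import FunctionalExtensionality Classical Wf_nat.

Set Implicit Arguments.
Unset Strict Implicit.
Unset Printing Implicit Defensive.

Local Open Scope group_scope.

(* The map r |-> g_r is a homomorphism Z^n -> G modulo C, and g_(s+m) = g_s g_m
   holds for every s exactly when m satisfies the condition defining X (each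
   prefix x_1^m_1 ... x_(k-1)^m_(k-1) commutes with x_k).  For such m one gets
   l_(r+m,lam) = g_m^-1 l_(r,lam) g_m, and links lie in C, so all links are
   m-periodic exactly when moreover g_m centralizes C.  Periodicity passes to
   products and inverses of the lam's, hence depends only on the subgroup that
   Lambda generates.  The exponent vectors of P thus form a subgroup of Z^n.
   Since C is finite, a power of x_i acts trivially on C by conjugation and
   x_i^V_ij commutes with x_j, so m_i e_i is such a vector; and a subgroup of
   Z^n containing a positive multiple of every e_i has a triangular basis (in
   each coordinate take the element vanishing above it with least positive
   pivot), which yields P ~= Z^n. *)

Section GroupFacts.
Variable G : groupType.
Implicit Types a b c d g h : G.
Local Notation C := (@commutator_subgroup G).

Lemma gen_subgroup (S : G -> Prop) : is_subgroup (gen S).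
Proof.
split=> [H [] // | a b Sa Sb H HH HS | a Sa H HH HS]; case: (HH) => _ HM HV.
- by apply: HM; [apply: Sa | apply: Sb].
- by apply: HV; apply: Sa.
Qed.

Lemma sub_gen (S : G -> Prop) s : S s -> gen S s.
Proof. by move=> Ss H _; apply. Qed.

Lemma commsub1 : C 1.
Proof. by case: (gen_subgroup (fun g => exists a b, g = comm a b)). Qed.

Lemma commsubM a b : C a -> C b -> C (a * b).
Proof. by case: (gen_subgroup (fun g => exists a b, g = comm a b)) => _ + _; apply. Qed.

Lemma commsubV a : C a -> C a^-1.
Proof. by case: (gen_subgroup (fun g => exists a b, g = comm a b)) => _ _; apply. Qed.

Lemma commsub_comm a b : C (comm a b).
Proof. by apply: sub_gen; exists a, b. Qed.

Lemma commsubJ c g : C c -> C (c ^ g).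
Proof.
move=> Cc; apply: (Cc (fun c => C (c ^ g))); last first.
  by move=> _ [a [b ->]]; rewrite /comm -/[~ a, b] conjRg; apply: commsub_comm.
split=> [|a b Ca Cb|a Ca]; first by rewrite conj1g; apply: commsub1.
- by rewrite conjMg; apply: commsubM.
- by rewrite conjVg; apply: commsubV.
Qed.

Lemma centralizerM (S : G -> Prop) a b :
  centralizer S a -> centralizer S b -> centralizer S (a * b).
Proof.
move=> Sa Sb c Sc; apply/commute_sym/commuteM; apply/commute_sym; [exact: Sa | exact: Sb].
Qed.

Lemma centralizerV (S : G -> Prop) a : centralizer S a -> centralizer S a^-1.
Proof. by move=> Sa c Sc; apply/commute_sym/commuteV/commute_sym; apply: Sa. Qed.

Lemma commute_expg_dvdn a b (d N : nat) :
  (d %| N)%N -> commute (a ^+ d) b -> commute (a ^+ N) b.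
Proof.
by case/dvdnP=> q -> /commute_sym ab; rewrite mulnC expgnA; apply/commute_sym/commuteX.
Qed.

(* [is_rvec x g r] is convertible to [eqmodC (gr x r) g]. *)
Definition eqmodC a b := C (a^-1 * b).

Lemma eqmodC_refl a : eqmodC a a.
Proof. by rewrite /eqmodC mulVg; apply: commsub1. Qed.

Lemma eqmodC_sym a b : eqmodC a b -> eqmodC b a.
Proof. by rewrite /eqmodC => /commsubV; rewrite invgM invgK. Qed.

Lemma eqmodC_trans a b c : eqmodC a b -> eqmodC b c -> eqmodC a c.
Proof. by rewrite /eqmodC => Hab /(commsubM Hab); rewrite mulgA mulgK. Qed.

Lemma eqmodCMl g a b : eqmodC a b -> eqmodC (g * a) (g * b).
Proof. by rewrite /eqmodC invgM -mulgA (mulgA g^-1) mulVg mul1g. Qed.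

Lemma eqmodCMr g a b : eqmodC a b -> eqmodC (a * g) (b * g).
Proof. by rewrite /eqmodC invgM -mulgA => /(commsubJ g); rewrite conjgE !mulgA. Qed.

Lemma eqmodCM a b c d : eqmodC a b -> eqmodC c d -> eqmodC (a * c) (b * d).
Proof. by move=> Hab Hcd; apply: eqmodC_trans (eqmodCMr c Hab) (eqmodCMl b Hcd). Qed.

Lemma eqmodC_mulC a b : eqmodC (a * b) (b * a).
Proof. by rewrite /eqmodC invgM -!mulgA; apply: commsub_comm. Qed.

Lemma eqmodC_mul2l g a b : eqmodC (g * a) (g * b) -> eqmodC a b.
Proof. by move/(eqmodCMl g^-1); rewrite !mulKg. Qed.

Lemma eqmodC1 a : eqmodC a 1 -> C a.
Proof. by rewrite /eqmodC mulg1 => /commsubV; rewrite invgK. Qed.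

Lemma eqmodC_big_split (I : Type) (r : seq I) (P : pred I) (F H : I -> G) :
  eqmodC ((\prod_(i <- r | P i) F i) * \prod_(i <- r | P i) H i)
         (\prod_(i <- r | P i) (F i * H i)).
Proof.
elim: r => [|i r IH]; first by rewrite !big_nil mulg1; apply: eqmodC_refl.
rewrite !big_cons; case: (P i) => //; rewrite -!mulgA; apply: eqmodCMl.
apply: eqmodC_trans (eqmodCMl _ IH); rewrite !mulgA.
by apply: eqmodCMr; apply: eqmodC_mulC.
Qed.

Lemma gexpzS g (a : int) : gexpz g (a + 1)%R = gexpz g a * g.
Proof.
case: a => [k|[|k]]; first by rewrite -PoszD addn1 /= expgSr.
- by rewrite mulVg.
- have -> : (Negz k.+1 + 1)%R = Negz k by rewrite !NegzE; lia.
  by rewrite /= [g ^+ k.+2]expgS invgM mulgVK.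
Qed.

Lemma gexpzD g (a b : int) : gexpz g (a + b)%R = gexpz g a * gexpz g b.
Proof.
elim/int_rec: b => [|k IH|k IH]; first by rewrite GRing.addr0 mulg1.
- have -> : Posz k.+1 = (Posz k + 1)%R by lia.
  by rewrite GRing.addrA !gexpzS IH mulgA.
- apply: (mulIg g); rewrite -mulgA -!gexpzS -GRing.addrA.
  by have -> : (- Posz k.+1 + 1)%R = (- Posz k)%R by lia.
Qed.

Lemma commute_gexpz h g (a : int) : commute h g -> commute h (gexpz g a).
Proof. by case: a => k /= Hhg; [|apply: commuteV]; apply: commuteX. Qed.

End GroupFacts.

Section Vectors.
Variable n : nat.
Local Notation vec := ('I_n -> int).
Implicit Types a b c : vec.

Definition vzero : vec := fun _ => 0%R.
Definition vopp a : vec := fun i => (- a i)%R.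
Definition vdelta (i : 'I_n) (t : int) : vec := fun j => if j == i then t else 0%R.

Ltac vext := apply: functional_extensionality => i; rewrite /vadd /vzero /vopp; lia.

Lemma vaddC a b : vadd a b = vadd b a. Proof. vext. Qed.
Lemma vaddA a b c : vadd a (vadd b c) = vadd (vadd a b) c. Proof. vext. Qed.
Lemma vaddAC a b c : vadd (vadd a b) c = vadd (vadd a c) b. Proof. vext. Qed.
Lemma vadd0l a : vadd vzero a = a. Proof. vext. Qed.
Lemma vaddr0 a : vadd a vzero = a. Proof. vext. Qed.
Lemma vaddNr a : vadd (vopp a) a = vzero. Proof. vext. Qed.
Lemma vaddrN a : vadd a (vopp a) = vzero. Proof. vext. Qed.

Lemma vdelta_ne (i j : 'I_n) t : j != i -> vdelta i t j = 0%R.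
Proof. by rewrite /vdelta => /negPf ->. Qed.

Lemma vdelta_lt (i j : 'I_n) t : (j < i)%N -> vdelta i t j = 0%R.
Proof. by move=> ji; rewrite vdelta_ne // -val_eqE ltn_eqF. Qed.

Lemma vdelta_gt (i j : 'I_n) t : (i < j)%N -> vdelta i t j = 0%R.
Proof. by move=> ij; rewrite vdelta_ne // -val_eqE gtn_eqF. Qed.

End Vectors.
Arguments vzero {n}.

Lemma pigeonhole_nat (T : eqType) (s : seq T) (f : nat -> T) :
  (forall k, f k \in s) -> exists k1 k2, (k1 < k2)%N /\ f k1 = f k2.
Proof.
move=> fs; set t := map f (iota 0 (size s).+1).
have t_dup : ~~ uniq t.
  apply/negP => /uniq_leq_size le_ts.
  have /le_ts : {subset t <= s} by move=> _ /mapP[k _ ->].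
  by rewrite size_map size_iota ltnn.
have [i [j [ij jt eq_ij]]] := uniqPn (f 0%N) t_dup; exists i, j; split=> //.
rewrite size_map size_iota in jt; have it := ltn_trans ij jt.
by move: eq_ij; rewrite !(nth_map 0%N) ?size_iota // !nth_iota.
Qed.

Lemma least_positive (P : nat -> Prop) :
  (exists2 k, (0 < k)%N & P k) ->
  exists k, (0 < k)%N /\ P k /\ forall j, (0 < j < k)%N -> ~ P j.
Proof.
case=> k k0 Pk; pose Q j := (0 < j)%N /\ P j.
have decQ j : Q j \/ ~ Q j by apply: classic.
have [m [[[m0 Pm] min_m] _]] :=
  dec_inh_nat_subset_has_unique_least_element Q decQ (ex_intro Q k (conj k0 Pk)).
exists m; do 2!split=> //; move=> j /andP[j0 jm] Pj.
by have /leP := min_m j (conj j0 Pj); rewrite leqNgt jm.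
Qed.

Section FullRankLattice.
Import GRing.Theory Num.Theory.
Local Open Scope ring_scope.
Variable n : nat.
Local Notation vec := ('I_n -> int).
Implicit Types a c m : vec.

Definition vscale (q : int) a : vec := fun j => q * a j.

Definition vanish_above (k : 'I_n) m := forall j : 'I_n, (k < j)%N -> m j = 0.

Variable M : vec -> Prop.
Hypothesis M0 : M vzero.
Hypothesis MD : forall a c, M a -> M c -> M (vadd a c).
Hypothesis MN : forall a, M a -> M (vopp a).
Hypothesis M_full : forall i, exists2 N : nat, (0 < N)%N & M (vdelta i N).

Lemma M_scale q a : M a -> M (vscale q a).
Proof.
move=> Ma; elim/int_rec: q => [|k IH|k IH].
- rewrite (_ : vscale 0 a = vzero) //.
  by apply: functional_extensionality => j; rewrite /vscale mul0r.
- rewrite (_ : vscale _ a = vadd (vscale k a) a); first exact: MD.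
  by apply: functional_extensionality => j; rewrite /vadd /vscale -addn1 PoszD mulrDl mul1r.
- rewrite (_ : vscale _ a = vadd (vscale (- Posz k) a) (vopp a)).
    by apply: MD => //; apply: MN.
  apply: functional_extensionality => j.
  by rewrite /vadd /vscale /vopp -addn1 PoszD opprD mulrDl mulN1r.
Qed.

Lemma M_sum (s : seq 'I_n) (f : 'I_n -> vec) :
  (forall k, M (f k)) -> M (fun j => \sum_(k <- s) f k j).
Proof.
move=> Mf; elim: s => [|k s IH].
  rewrite (_ : (fun j => _) = vzero) //.
  by apply: functional_extensionality => j; rewrite big_nil.
rewrite (_ : (fun j => _) = vadd (f k) (fun j => \sum_(i <- s) f i j)); first exact: MD.
by apply: functional_extensionality => j; rewrite big_cons.
Qed.

Lemma exists_pivot k : exists b, [/\ M b, vanish_above k b, 0 < b k &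
  forall m, M m -> vanish_above k m -> (b k %| m k)%Z].
Proof.
pose P (p : nat) := exists2 m, M m /\ vanish_above k m & m k = p.
have [N N0 MN_k] := M_full k.
have [|p [p0 [[b [Mb b_above] bkp] min_p]]] := @least_positive P.
  exists N => //; exists (vdelta k N); last by rewrite /vdelta eqxx.
  by split=> // j; apply: vdelta_gt.
exists b; split=> //; first by rewrite bkp ltz_nat.
move=> m Mm m_above; rewrite bkp; apply/dvdz_mod0P.
pose m' := vadd m (vscale (- (m k %/ p)%Z) b).
have P_m'_k : M m' /\ vanish_above k m'.
  split; first by apply: MD => //; apply: M_scale.
  by move=> j kj; rewrite /m' /vadd /vscale m_above // b_above // mulr0 addr0.
have m'k : m' k = (m k %% p)%Z.
  by rewrite /m' /vadd /vscale bkp mulNr {1}(divz_eq (m k) p) addrAC subrr add0r.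
have p_pos : 0 < Posz p by rewrite ltz_nat.
have := modz_ge0 (m k) (lt0r_neq0 p_pos); have := ltz_pmod (m k) p_pos.
case: (m k %% p)%Z m'k => [[|r]|r] // m'k lt_rp _.
rewrite ltz_nat in lt_rp; case: (min_p r.+1) => //; exists m' => //.
Qed.

Section Basis.
Variable b : 'I_n -> vec.
Hypothesis Mb : forall k, M (b k).
Hypothesis b_above : forall k, vanish_above k (b k).
Hypothesis b_pos : forall k, 0 < b k k.
Hypothesis b_dvd : forall k m, M m -> vanish_above k m -> (b k k %| m k)%Z.

Definition vcomb a : vec := fun j => \sum_(k < n) a k * b k j.

Lemma vcombD a c : vcomb (vadd a c) = vadd (vcomb a) (vcomb c).
Proof.
apply: functional_extensionality => j; rewrite /vcomb /vadd -big_split /=.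
by apply: eq_bigr => k _; rewrite mulrDl.
Qed.

Lemma vcomb_vdelta k q : vcomb (vdelta k q) = vscale q (b k).
Proof.
apply: functional_extensionality => j; rewrite /vcomb (bigD1 k) //= /vdelta eqxx big1 ?addr0 //.
by move=> i /negPf ->; rewrite mul0r.
Qed.

Lemma vcomb0 : vcomb vzero = vzero.
Proof. by apply: functional_extensionality => j; rewrite /vcomb big1 // => k _; rewrite mul0r. Qed.

Lemma M_vcomb a : M (vcomb a).
Proof. by apply: M_sum => k; apply: M_scale. Qed.

Lemma vcomb_pivot a k : vanish_above k a -> vcomb a k = a k * b k k.
Proof.
move=> a_above; rewrite /vcomb (bigD1 k) //= big1 ?addr0 // => j /negPf ne_jk.
case: (ltngtP j k) => [lt_jk | lt_kj | /val_inj eq_jk]; last by rewrite eq_jk eqxx in ne_jk.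
- by rewrite b_above ?mulr0.
- by rewrite a_above ?mul0r.
Qed.

Lemma vcomb_eq0 c : vcomb c = vzero -> c = vzero.
Proof.
move=> c0; apply: functional_extensionality => i; apply/eqP/negPn/negP => ci.
have [k ck max_k] := arg_maxnP (P := fun k => c k != 0) (fun k : 'I_n => val k) ci.
have c_above : vanish_above k c.
  by move=> j lt_kj; apply/eqP/negPn/negP => /max_k /=; rewrite leqNgt lt_kj.
have := vcomb_pivot c_above; rewrite c0 => /esym/eqP.
by rewrite mulf_eq0 (negPf ck) (negPf (lt0r_neq0 (b_pos k))).
Qed.

Lemma vcomb_inj : injective vcomb.
Proof.
move=> a a' eq_aa'; have /vcomb_eq0 d0 : vcomb (vadd a (vopp a')) = vzero.
  by rewrite vcombD eq_aa' -vcombD vaddrN vcomb0.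
apply: functional_extensionality => j.
by have /eqP := congr1 (fun c => c j) d0; rewrite subr_eq0 => /eqP.
Qed.

Lemma vcomb_onto m : M m -> exists a, m = vcomb a.
Proof.
suff onto_below t : forall m, M m -> (forall j : 'I_n, (t <= j)%N -> m j = 0) ->
    exists a, m = vcomb a.
  by move=> Mm; apply: (onto_below n) => // j; rewrite leqNgt ltn_ord.
elim: t => [|t IH] {}m Mm m_t.
  by exists vzero; rewrite vcomb0; apply: functional_extensionality => j; apply: m_t.
have [lt_tn | le_nt] := ltnP t n; last first.
  by apply: IH => // j; rewrite leqNgt (leq_trans (ltn_ord j) le_nt).
pose k := Ordinal lt_tn; pose q := (m k %/ b k k)%Z.
pose m' := vadd m (vscale (- q) (b k)).
have [a' m'E] : exists a', m' = vcomb a'.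
  apply: IH; first by apply: MD => //; apply: M_scale.
  move=> j le_tj; rewrite /m' /vadd /vscale; case: (ltngtP t j) => [lt_tj | | eq_tj].
  - by rewrite m_t // b_above // mulr0 addr0.
  - by rewrite ltnNge le_tj.
  - have -> : j = k by apply: val_inj.
    by rewrite mulNr divzK ?subrr // b_dvd // => i; apply: m_t.
exists (vadd a' (vdelta k q)); rewrite vcombD -m'E vcomb_vdelta.
by apply: functional_extensionality => j; rewrite /m' /vadd /vscale mulNr addrNK.
Qed.

End Basis.

Lemma full_rank_lattice : exists phi : vec -> vec,
  [/\ forall a c, phi (vadd a c) = vadd (phi a) (phi c),
      injective phi &
      forall m, M m <-> exists a, m = phi a].
Proof.
have [b /all_and4[Mb b_above b_pos b_dvd]] := fin_all_exists exists_pivot.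
exists (vcomb b); split; [exact: vcombD | exact: vcomb_inj | move=> m].
by split=> [/vcomb_onto | [a ->]]; [apply | apply: M_vcomb].
Qed.

End FullRankLattice.

Section FiniteCommutatorSubgroup.
Variable G : groupType.
Implicit Types c y : G.

Lemma conj_period y c (s : seq G) :
  (forall k, c ^ (y ^+ k) \in s) -> exists2 d, (0 < d)%N & commute c (y ^+ d).
Proof.
case/pigeonhole_nat=> k1 [k2 [lt_k12 eq_conj]]; set d := (k2 - k1)%N.
have k2E : k2 = (d + k1)%N by rewrite subnK // ltnW.
exists d; first by rewrite subn_gt0.
move: eq_conj; rewrite k2E expgnDr conjgM => /conjg_inj fix_c.
by rewrite /commute conjgC -fix_c.
Qed.

Lemma common_period y (cs : seq G) :
  (forall c, c \in cs -> exists2 d, (0 < d)%N & commute c (y ^+ d)) ->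
  exists2 D, (0 < D)%N & forall c, c \in cs -> commute c (y ^+ D).
Proof.
elim: cs => [|c cs IH] periods; first by exists 1%N.
have [D D0 cs_D] := IH (fun c' cs_c' => periods c' (mem_behead (s := c :: cs) cs_c')).
have [d d0 c_d] := periods c (mem_head c cs).
exists (d * D)%N => [|c']; first by rewrite muln_gt0 d0.
case/predU1P=> [-> | /cs_D c'_D]; first by rewrite expgnA; apply: commuteX.
by rewrite mulnC expgnA; apply: commuteX.
Qed.

Local Notation C := (@commutator_subgroup G).
Hypothesis finC : finite_set C.

Lemma commsub_conj_period y c : C c -> exists2 d, (0 < d)%N & commute c (y ^+ d).
Proof.
have [s Cs] := finC; move=> Cc; apply: (@conj_period _ _ s) => k.
by apply/Cs; apply: commsubJ.
Qed.

Lemma exists_V n (x : 'I_n -> G) i j : exists V, is_V x i j V.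
Proof.
have [s Cs] := finC.
have [d d0 jd] : exists2 d, (0 < d)%N & commute (x j) (x i ^+ d).
  apply: (@conj_period _ _ (map ( *%g (x j)) s)) => k.
  have -> : x j ^ (x i ^+ k) = x j * [~ x j, x i ^+ k] by rewrite commgEl mulVKg.
  by apply: map_f; apply/Cs; apply: commsub_comm.
by apply: least_positive; exists d => //; apply/eqP/commgP/commute_sym.
Qed.

Lemma exists_v n (x : 'I_n -> G) i : exists v, is_v x i v.
Proof.
have [s Cs] := finC.
have [D D0 sD] : exists2 D, (0 < D)%N & forall c, c \in s -> commute c (x i ^+ D).
  by apply: common_period => c /Cs; apply: commsub_conj_period.
by apply: least_positive; exists D => // c /Cs /sD /commute_sym.
Qed.

End FiniteCommutatorSubgroup.

Section Transversal.
Variables (G : groupType) (n : nat) (x : 'I_n -> G).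
Local Notation gr := (gr x).
Local Notation vec := ('I_n -> int).
Implicit Types r s m : vec.

(* Extending the factors of g_r by 1 beyond n lets us split g_r along nat ranges. *)
Definition xpow r (i : nat) : G := oapp (fun j => gexpz (x j) (r j)) 1 (insub i).

Lemma xpowE r (j : 'I_n) : xpow r j = gexpz (x j) (r j).
Proof. by rewrite /xpow valK. Qed.

Lemma xpow_out r i : (n <= i)%N -> xpow r i = 1.
Proof. by move=> ni; rewrite /xpow insubN // -leqNgt. Qed.

Lemma xpowD r s i : xpow (vadd r s) i = xpow r i * xpow s i.
Proof.
case: (ltnP i n) => [lt_in | le_ni]; last by rewrite !xpow_out ?mulg1.
by rewrite -[i]/(val (Ordinal lt_in)) !xpowE gexpzD.
Qed.

Lemma eq_prod_xpow a b r r' : (forall j : 'I_n, (a <= j < b)%N -> r j = r' j) ->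
  \prod_(a <= i < b) xpow r i = \prod_(a <= i < b) xpow r' i.
Proof.
move=> eq_rr'; apply: eq_big_nat => i ab_i; rewrite /xpow.
by case: insubP => //= j _ ji; rewrite eq_rr' // ji.
Qed.

Lemma prod_xpow_eq1 a b r : (forall j : 'I_n, (a <= j < b)%N -> r j = 0%R) ->
  \prod_(a <= i < b) xpow r i = 1.
Proof.
move=> r0; rewrite (@eq_prod_xpow _ _ _ (@vzero n)) // big1 // => i _.
by rewrite /xpow; case: insub.
Qed.

Lemma grE r : gr r = \prod_(0 <= i < n) xpow r i.
Proof. by rewrite big_mkord; apply: eq_bigr => j _; rewrite xpowE. Qed.

Lemma gprefixE r (k : 'I_n) : gprefix x r k = \prod_(0 <= i < k) xpow r i.
Proof.
rewrite big_mkord (big_ord_widen_cond n predT (xpow r) (ltnW (ltn_ord k))).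
by apply: eq_bigr => j _; rewrite xpowE.
Qed.

Lemma gr_split r (k : 'I_n) :
  gr r = gprefix x r k * (gexpz (x k) (r k) * \prod_(k.+1 <= i < n) xpow r i).
Proof.
rewrite grE gprefixE (big_cat_nat (leq0n k) (ltnW (ltn_ord k))).
by rewrite (big_ltn (ltn_ord k)) xpowE.
Qed.

Lemma prod_xpow_vdelta a b (i : 'I_n) t : (a <= i < b)%N ->
  \prod_(a <= j < b) xpow (vdelta i t) j = gexpz (x i) t.
Proof.
case/andP=> ai ib; rewrite (big_cat_nat ai (ltnW ib)) (big_ltn ib) xpowE /vdelta eqxx.
rewrite /= !prod_xpow_eq1 ?mul1g ?mulg1 // => j.
  by case/andP=> ij _; apply: vdelta_gt.
by case/andP=> _ ji; apply: vdelta_lt.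
Qed.

Lemma gr_vdelta i t : gr (vdelta i t) = gexpz (x i) t.
Proof. by rewrite grE prod_xpow_vdelta /=. Qed.

Lemma gr0 : gr (@vzero n) = 1.
Proof. by rewrite /Defs.gr big1. Qed.

Lemma gr_eqmodC r s : eqmodC (gr r * gr s) (gr (vadd r s)).
Proof.
apply: eqmodC_trans (eqmodC_big_split _ _ _ _) _.
rewrite /Defs.gr /vadd; under [X in eqmodC _ X]eq_bigr do rewrite gexpzD.
exact: eqmodC_refl.
Qed.

Definition Xcond m := forall k : 'I_n, comm (gprefix x m k) (x k) = 1.

Definition gr_morph m := forall s, gr (vadd s m) = gr s * gr m.

Lemma Xcond_gr_morph m : Xcond m -> gr_morph m.
Proof.
move=> Xm s; have prefix_morph j :
    \prod_(0 <= i < j) xpow s i * \prod_(0 <= i < j) xpow m i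
    = \prod_(0 <= i < j) xpow (vadd s m) i.
  elim: j => [|j IH]; first by rewrite !big_geq // mulg1.
  rewrite !big_nat_recr //= xpowD -IH !mulgA; congr (_ * _); rewrite -!mulgA.
  congr (_ * _); case: (ltnP j n) => [lt_jn | le_nj]; last by rewrite xpow_out ?mul1g ?mulg1.
  rewrite -[j]/(val (Ordinal lt_jn)) xpowE -gprefixE; apply/esym/commute_gexpz.
  by apply/commgP/eqP; apply: Xm.
by rewrite !grE prefix_morph.
Qed.

Lemma gr_morph_Xcond m : gr_morph m -> Xcond m.
Proof.
move=> Mm k; have := Mm (vdelta k 1); rewrite gr_vdelta !(gr_split _ k) !gprefixE.
rewrite (@eq_prod_xpow _ _ (vadd _ m) m) => [|j /andP[_ jk]]; last first.
  by rewrite /vadd vdelta_lt ?GRing.add0r.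
rewrite (@eq_prod_xpow _ _ (vadd _ m) m) => [|j /andP[kj _]]; last first.
  by rewrite /vadd vdelta_gt ?GRing.add0r.
rewrite /vadd /vdelta eqxx gexpzD !mulgA => /mulIg /mulIg comm_prefix.
by apply/eqP/commgP; apply: comm_prefix.
Qed.

End Transversal.

Section Periods.
Variables (G : groupType) (n : nat) (x : 'I_n -> G).
Local Notation C := (@commutator_subgroup G).
Local Notation gr := (gr x).
Local Notation vec := ('I_n -> int).
Implicit Types r s m : vec.

Definition Pvec m := gr_morph x m /\ centralizer C (gr m).

Lemma gr_vopp m : gr_morph x m -> gr (vopp m) = (gr m)^-1.
Proof. by move=> Mm; apply: (mulIg (gr m)); rewrite mulVg -Mm vaddNr gr0. Qed.

Lemma gr_morph0 : gr_morph x vzero.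
Proof. by move=> s; rewrite vaddr0 gr0 mulg1. Qed.

Lemma gr_morphD a b : gr_morph x a -> gr_morph x b -> gr_morph x (vadd a b).
Proof. by move=> Ma Mb s; rewrite vaddA Mb Ma Mb mulgA. Qed.

Lemma gr_morphN m : gr_morph x m -> gr_morph x (vopp m).
Proof.
move=> Mm s; rewrite gr_vopp //; apply: (mulIg (gr m)).
by rewrite mulgVK -Mm -vaddA vaddNr vaddr0.
Qed.

Lemma Pvec0 : Pvec vzero.
Proof. by split; [apply: gr_morph0 | rewrite gr0 => c _; rewrite mul1g mulg1]. Qed.

Lemma PvecD a b : Pvec a -> Pvec b -> Pvec (vadd a b).
Proof.
case=> Ma Ca [Mb Cb]; split; first exact: gr_morphD.
by rewrite Mb; apply: centralizerM.
Qed.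

Lemma PvecN m : Pvec m -> Pvec (vopp m).
Proof.
case=> Mm Cm; split; first exact: gr_morphN.
by rewrite gr_vopp //; apply: centralizerV.
Qed.

Lemma Pset_gr g : Pset x g -> exists2 m, g = gr m & Pvec m.
Proof. by case=> [[m [-> Xm]] Cm]; exists m; split=> //; apply: Xcond_gr_morph. Qed.

Lemma Pvec_Pset m : Pvec m -> Pset x (gr m).
Proof. by case=> Mm Cm; split=> //; exists m; split=> //; apply: gr_morph_Xcond. Qed.

Lemma P_subgroup : is_subgroup (Pset x).
Proof.
split=> [|_ _ /Pset_gr[a -> Pa] /Pset_gr[b -> Pb] | _ /Pset_gr[m -> Pm]].
- by rewrite -(@gr0 _ _ x); apply/Pvec_Pset/Pvec0.
- by rewrite -(proj1 Pb); apply/Pvec_Pset/PvecD.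
- by rewrite -gr_vopp; [apply/Pvec_Pset/PvecN | case: Pm].
Qed.

Hypothesis Hfree : forall r, C (gr r) -> forall i, r i = 0%R.

Lemma gr_inj_mod a b : eqmodC (gr a) (gr b) -> a = b.
Proof.
move=> ab; pose d := vadd b (vopp a).
have ad : vadd a d = b by rewrite vaddC -vaddA vaddNr vaddr0.
have : eqmodC (gr a * gr d) (gr a * 1).
  by rewrite mulg1; apply: eqmodC_trans (gr_eqmodC x a d) _; rewrite ad; apply: eqmodC_sym.
move=> /eqmodC_mul2l /eqmodC1 /Hfree d0; apply: functional_extensionality => i.
by have := d0 i; rewrite /d /vadd /vopp; lia.
Qed.

Lemma PsetP m : Pset x (gr m) <-> Pvec m.
Proof.
split=> [/Pset_gr[m' gr_mm' Pm'] | /Pvec_Pset //].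
by have -> : m = m' by apply: gr_inj_mod; rewrite gr_mm'; apply: eqmodC_refl.
Qed.

End Periods.

Section Links.
Variables (G : groupType) (n : nat) (x : 'I_n -> G).
Local Notation C := (@commutator_subgroup G).
Local Notation gr := (gr x).
Local Notation vec := ('I_n -> int).
Local Notation is_rvec := (is_rvec x).
Local Notation link := (link x).
Implicit Types r s m : vec.
Hypothesis Hspan : forall g : G, exists r, is_rvec g r.
Hypothesis Hfree : forall r, C (gr r) -> forall i, r i = 0%R.

Lemma rvec_uniq g r1 r2 : is_rvec g r1 -> is_rvec g r2 -> r1 = r2.
Proof.
by move=> g_r1 g_r2; apply: (gr_inj_mod Hfree); apply: eqmodC_trans g_r1 (eqmodC_sym g_r2).
Qed.

Lemma rvec_gr s : is_rvec (gr s) s.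
Proof. exact: eqmodC_refl. Qed.

Lemma rvec_commsub c : C c -> is_rvec c vzero.
Proof. by rewrite /Defs.is_rvec gr0 invg1 mul1g. Qed.

Lemma rvecM g h a b : is_rvec g a -> is_rvec h b -> is_rvec (g * h) (vadd a b).
Proof.
by move=> g_a h_b; apply: eqmodC_trans (eqmodC_sym (gr_eqmodC x a b)) (eqmodCM g_a h_b).
Qed.

Lemma rvecV g a : is_rvec g a -> is_rvec g^-1 (vopp a).
Proof.
move=> g_a; have : eqmodC (gr (vopp a) * g) 1.
  rewrite -(gr0 x) -(vaddNr a).
  exact: eqmodC_trans (eqmodCMl _ (eqmodC_sym g_a)) (gr_eqmodC x _ _).
by move/(eqmodCMr g^-1); rewrite mulgK mul1g.
Qed.

Lemma link_commsub r l rl : is_rvec l rl -> C (link r l rl).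
Proof.
move=> l_rl; apply: eqmodC1; rewrite /Defs.link -mulgA -[1](mulVg (gr (vadd r rl))).
apply: eqmodCMl; apply: eqmodC_trans (eqmodCMr _ (eqmodC_sym l_rl)) _.
by rewrite vaddC; apply: gr_eqmodC.
Qed.

Lemma link_mul r a b ra rb :
  link r (a * b) (vadd ra rb) = link (vadd r rb) a ra * link r b rb.
Proof. by rewrite /Defs.link vaddA vaddAC !mulgA mulgK. Qed.

Lemma link_inv r a ra : link r a^-1 (vopp ra) = (link (vadd r (vopp ra)) a ra)^-1.
Proof. by rewrite /Defs.link -vaddA vaddNr vaddr0 !invgM invgK mulgA. Qed.

Definition link_periodic m l :=
  forall r rl, is_rvec l rl -> link (vadd r m) l rl = link r l rl.

Lemma link_periodic_subgroup m : is_subgroup (link_periodic m).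
Proof.
split=> [r rl /(rvec_uniq (rvec_commsub (@commsub1 G))) <- | a b Sa Sb r rl | a Sa r rl].
- by rewrite /Defs.link !vaddr0 !mulg1 !mulVg.
- have [[ra a_ra] [rb b_rb]] := (Hspan a, Hspan b).
  move/(rvec_uniq (rvecM a_ra b_rb)) <-.
  by rewrite !link_mul vaddAC Sa // Sb.
- have [ra a_ra] := Hspan a; move/(rvec_uniq (rvecV a_ra)) <-.
  by rewrite !link_inv vaddAC Sa.
Qed.

Lemma Pvec_link_periodic m l : Pvec x m -> link_periodic m l.
Proof.
case=> Mm Cm r rl l_rl; have comm_link := Cm _ (link_commsub r l_rl).
have -> : link (vadd r m) l rl = (gr m)^-1 * (link r l rl * gr m).
  by rewrite /Defs.link vaddAC !Mm invgM !mulgA.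
by rewrite -comm_link mulKg.
Qed.

Lemma link_periodic_Pvec m : (forall l, link_periodic m l) -> Pvec x m.
Proof.
move=> Sm; split=> [s | c Cc].
- have := Sm (gr s) vzero s (rvec_gr s).
  rewrite /Defs.link !vadd0l gr0 mulg1 mulVg vaddC => /eqP.
  by rewrite -mulgA mulg_eq1 eqg_inv => /eqP.
- have := Sm c vzero vzero (rvec_commsub Cc).
  rewrite /Defs.link vadd0l !vaddr0 gr0 invg1 mulg1 mul1g => {1}<-.
  by rewrite !mulgA mulgV mul1g.
Qed.

Lemma link_periodicP (Lambda : G -> Prop) m : generates Lambda ->
  (forall r lam rlam, Lambda lam -> is_rvec lam rlam ->
     link (vadd r m) lam rlam = link r lam rlam) <-> Pset x (gr m).
Proof.
move=> gen_Lambda; rewrite (PsetP Hfree); split=> [Lm | Pm r l rl _]; last first.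
  exact: Pvec_link_periodic.
apply: link_periodic_Pvec => l; apply: (gen_Lambda l _ (link_periodic_subgroup m)).
by move=> lam Lam r rl; apply: Lm.
Qed.

End Links.

Section Straight.
Variables (G : groupType) (n : nat) (x : 'I_n -> G).

Lemma Xcond_vdelta (i : 'I_n) (N : nat) :
  (forall j : 'I_n, (i < j)%N -> comm (x i ^+ N) (x j) = 1) -> Xcond x (vdelta i N).
Proof.
move=> comm_ij k; rewrite gprefixE; case: (ltnP i k) => [lt_ik | le_ki].
  by rewrite prod_xpow_vdelta ?lt_ik // comm_ij.
rewrite prod_xpow_eq1 => [|j /andP[_ lt_jk]]; first exact: comm1g.
by apply: vdelta_lt; apply: leq_trans lt_jk le_ki.
Qed.

Variables (V : 'I_n -> 'I_n -> nat) (v : 'I_n -> nat).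
Hypothesis HV : forall i j, is_V x i j (V i j).
Hypothesis Hv : forall i, is_v x i (v i).

Lemma mstraight_gt0 i : (0 < mstraight V v i)%N.
Proof.
rewrite /mstraight lcmn_gt0 (proj1 (Hv i)) andbT.
elim/big_ind: _ => [// | a b a0 b0 | j _]; first by rewrite lcmn_gt0 a0 b0.
exact: (proj1 (HV i j)).
Qed.

Lemma Pvec_straight i : Pvec x (vdelta i (mstraight V v i)).
Proof.
split.
- apply/Xcond_gr_morph/Xcond_vdelta => j lt_ij; apply/eqP/commgP.
  apply: (@commute_expg_dvdn _ _ _ (V i j)).
    exact: dvdn_trans (biglcmn_sup j lt_ij (dvdnn _)) (dvdn_lcml _ _).
  by apply/commgP/eqP; case: (HV i j) => _ [].
- rewrite gr_vdelta => c Cc; apply: (@commute_expg_dvdn _ _ _ (v i)).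
    exact: dvdn_lcmr.
  by case: (Hv i) => _ [cent_v _]; apply: cent_v.
Qed.

Lemma Pstraight_sub_P g : Pstraight x V v g -> Pset x g.
Proof.
apply=> [|_ [i ->]]; first exact: P_subgroup.
rewrite -[x i ^+ _]/(gexpz (x i) (mstraight V v i)) -gr_vdelta.
exact/Pvec_Pset/Pvec_straight.
Qed.

End Straight.

Lemma expg_generator_neq1 (G : groupType) n (x : 'I_n -> G) i (N : nat) :
  (forall r, commutator_subgroup (gr x r) -> forall i, r i = 0%R) ->
  (0 < N)%N -> x i ^+ N <> 1.
Proof.
move=> Hfree N0 xN1; have := Hfree (vdelta i N); rewrite gr_vdelta /= xN1.
by move=> /(_ (@commsub1 G) i); rewrite /vdelta eqxx; case: N N0 {xN1}.
Qed.

Lemma P_isomorphic_Zn (G : groupType) n (x : 'I_n -> G)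
    (V : 'I_n -> 'I_n -> nat) (v : 'I_n -> nat) :
  (forall r, commutator_subgroup (gr x r) -> forall i, r i = 0%R) ->
  (forall i j, is_V x i j (V i j)) -> (forall i, is_v x i (v i)) ->
  exists phi : ('I_n -> int) -> G,
    [/\ forall a b, phi (vadd a b) = phi a * phi b,
        injective phi &
        forall g, Pset x g <-> exists a, g = phi a].
Proof.
move=> Hfree HV Hv.
have P_full i : exists2 N : nat, (0 < N)%N & Pvec x (vdelta i N).
  by exists (mstraight V v i); [apply: mstraight_gt0 | apply: Pvec_straight].
have [phi [phiD phi_inj phi_onto]] :=
  full_rank_lattice (@Pvec0 _ _ x) (@PvecD _ _ x) (@PvecN _ _ x) P_full.
have Pphi a : Pvec x (phi a) by apply/phi_onto; exists a.
exists (fun a => gr x (phi a)); split.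
- by move=> a b; rewrite phiD (proj1 (Pphi b)).
- move=> a b eq_ab; apply/phi_inj/(gr_inj_mod Hfree).
  by rewrite eq_ab; apply: eqmodC_refl.
- move=> g; split=> [/Pset_gr[m -> /phi_onto[a ->]] | [a ->]]; first by exists a.
  exact: Pvec_Pset.
Qed.

Theorem theorem3 (G : groupType) (n : nat) (x : 'I_n -> G)
  (n_pos : (0 < n)%N)
  (Hgen : generates (fun g => exists i, g = x i))
  (Hfin : finite_set (@commutator_subgroup G))
  (Hspan : forall g : G, exists r, is_rvec x g r)
  (Hfree : forall r : 'I_n -> int,
      commutator_subgroup (gr x r) -> forall i, r i = 0%R) :
  (* the numbers V_ij and v_i exist *)
  ((forall i j : 'I_n, exists V, is_V x i j V) /\
   (forall i : 'I_n, exists v, is_v x i v)) /\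
  (* 1. *)
  (forall Lambda : G -> Prop, generates Lambda ->
     forall m : 'I_n -> int,
       (forall (r : 'I_n -> int) (lam : G) (rlam : 'I_n -> int),
           Lambda lam -> is_rvec x lam rlam ->
           link x (vadd r m) lam rlam = link x r lam rlam)
       <-> Pset x (gr x m)) /\
  (* 2. *)
  (is_subgroup (Pset x) /\
   exists phi : ('I_n -> int) -> G,
     [/\ forall a b, phi (vadd a b) = phi a * phi b,
         injective phi &
         forall g, Pset x g <-> exists a, g = phi a]) /\
  (* 3. *)
  (forall (V : 'I_n -> 'I_n -> nat) (v : 'I_n -> nat),
     (forall i j : 'I_n, is_V x i j (V i j)) ->
     (forall i : 'I_n, is_v x i (v i)) ->
     (forall g, Pstraight x V v g -> Pset x g) /\
     (exists g, Pstraight x V v g /\ g <> 1)).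
Proof.
have [V HV] : exists V : 'I_n -> 'I_n -> nat, forall i j, is_V x i j (V i j).
  apply: (@fin_all_exists _ _ (fun i Vi => forall j, is_V x i j (Vi j))) => i.
  by apply: fin_all_exists => j; apply: (exists_V Hfin).
have [v Hv] : exists v : 'I_n -> nat, forall i, is_v x i (v i).
  by apply: fin_all_exists => i; apply: (exists_v Hfin).
split; first by split=> [i j | i]; [exists (V i j) | exists (v i)].
split; first by move=> Lambda gen_Lambda m; apply: (link_periodicP Hspan Hfree).
split; first by split; [apply: P_subgroup | apply: (P_isomorphic_Zn Hfree HV Hv)].
move=> V' v' HV' Hv'; split; first exact: Pstraight_sub_P.
pose i0 := Ordinal n_pos; exists (x i0 ^+ mstraight V' v' i0); split.
  by apply: sub_gen; exists i0.
by apply: expg_generator_neq1 => //; apply: mstraight_gt0.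
Qed.
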